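(* Let $x=\{x_n\}_{n=1}^\infty$ be a complex sequence with $x_n\neq0$ for all $n$ and $\sum_{k=1}^\infty|x_kx_{k+1}|<\infty$. Then $F_n:=\mathfrak{F}\big(\{x_k\}_{k=n}^\infty\big)$, $n\in\mathbb{N}$, is the unique solution of the second order difference equation \[ F_n-F_{n+1}+x_nx_{n+1}F_{n+2}=0,\quad n\in\mathbb{N}, \] satisfying $\lim_{n\to\infty}F_n=1$.
   Context: For a complex sequence $x=\{x_k\}_{k=N}^{\infty}$ with $\sum_{k\ge N}|x_kx_{k+1}|<\infty$, define \[ \mathfrak{F}(x)=1+\sum_{m=1}^\infty(-1)^m\sum_{k_1=N}^\infty\ \sum_{k_2=k_1+2}^\infty\cdots\sum_{k_m=k_{m-1}+2}^\infty x_{k_1}x_{k_1+1}x_{k_2}x_{k_2+1}\cdots x_{k_m}x_{k_m+1}. \] *)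

From HB Require Import structures.
From mathcomp Require Import all_boot all_order all_algebra.
From mathcomp Require Import all_classical all_reals all_analysis.
From mathcomp Require Import complex.
Set Implicit Arguments. Unset Strict Implicit. Unset Printing Implicit Defensive.
Import Order.TTheory GRing.Theory Num.Theory.
Import numFieldNormedType.Exports.
Local Open Scope ring_scope.

(* The standard (metric) topology / normed-module structure of the complex
   numbers R[i], i.e. the one induced by the modulus |z|; this is the
   library's own numFieldType-as-normed-module structure (R[i])^o, made
   canonical on R[i]. *)
HB.instance Definition _ (R : rcfType) := NormedModule.copy R[i] (R[i])^o.

(* A complex sequence {x_k}_{k>=N} is represented by x : nat -> R[i] together
   with the starting index N (only the values x_k, k >= N, are used). *)

(* nestedF x m N p
     = sum_{k_1>=N} sum_{k_2>=k_1+2} ... sum_{k_m>=k_{m-1}+2}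
          p * x_{k_1} x_{k_1+1} ... x_{k_m} x_{k_m+1},
   written literally as m nested series (each an infinite series
   \big[+%R/0]_(a <= k <oo) := limn of the partial sums). *)
Fixpoint nestedF (R : realType) (x : nat -> R[i]) (m N : nat) (p : R[i])
  : R[i] :=
  match m with
  | 0 => p
  | m'.+1 => \big[+%R/0]_(N <= k <oo) nestedF x m' k.+2 (p * (x k * x k.+1))
  end.

(* frakF x N = \mathfrak{F}({x_k}_{k=N}^\infty)
   = 1 + sum_{m>=1} (-1)^m sum_{k_1>=N} ... x_{k_1}x_{k_1+1}...x_{k_m}x_{k_m+1} *)
Definition frakF (R : realType) (x : nat -> R[i]) (N : nat) : R[i] :=
  1 + \big[+%R/0]_(1 <= m <oo) ((-1) ^+ m * nestedF x m N 1).

From HB Require Import structures.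
From mathcomp Require Import all_boot all_order all_algebra.
From mathcomp Require Import all_classical all_reals all_analysis.
From mathcomp Require Import complex.
From mathcomp Require Import lra zify ring.
Import Order.TTheory GRing.Theory Num.Theory.
Import numFieldNormedType.Exports.
Local Open Scope classical_set_scope.
Local Open Scope ring_scope.

(* Write a_k = x_k x_{k+1} and B_N = \sum_{k >= N} |a_k|.  The m-th nested sum
   S_m(N) of \mathfrak{F}({x_k}_{k >= N}) satisfies |S_m(N)| <= B_N^m and
   S_{m+1}(N) = a_N S_m(N+2) + S_{m+1}(N+1), so the partial sums of the series
   over m obey the recurrence F_N = F_{N+1} - a_N F_{N+2}.  For B_N <= 1/2 the
   series is dominated by a geometric one, giving convergence and
   |F_N - 1| <= 2 B_N, hence F_N -> 1; convergence then propagates to every N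
   backwards through the recurrence.  For uniqueness, a solution H tending to 0
   satisfies H_n = H_M - \sum_{n <= k < M} a_k H_{k+2}, so its tail bound at
   least halves once B_n <= 1/2: H vanishes eventually, and then everywhere by
   running the recurrence backwards. *)

Lemma near_oo_backward_ind (P : nat -> Prop) n0 :
  (\forall n \near \oo, P n) -> (forall n, (n0 <= n)%N -> P n.+1 -> P n.+2 -> P n) ->
  forall n, (n0 <= n)%N -> P n.
Proof.
move=> [M _ PM] Pstep; suff Pd d n : (n0 <= n)%N -> (M <= n + d)%N -> P n.
  by move=> n n0n; apply: (Pd M) => //; rewrite leq_addl.
elim: d n => [|d IH] n n0n Mnd; first by apply: PM; rewrite -[n]addn0.
by apply: Pstep => //; apply: IH; lia.
Qed.

Section ComplexSeries.
Context {R : realType}.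
Implicit Types (z : R[i]) (u : nat -> R[i]) (f : nat -> R).
Local Notation normc := (@ComplexField.Normc.normc R).
Local Notation Re := (@complex.Re R).
Local Notation Im := (@complex.Im R).

Lemma normr_normc z : `|z| = ((normc z)%:C)%C.
Proof. by case: z. Qed.

Lemma normc_ge0 z : 0 <= normc z.
Proof. by case: z => a b /=; exact: sqrtr_ge0. Qed.

Lemma normc_Re z : `|Re z| <= normc z.
Proof. by case: z => a b /=; rewrite -sqrtr_sqr ler_wsqrtr // lerDl sqr_ge0. Qed.

Lemma normc_Im z : `|Im z| <= normc z.
Proof. by case: z => a b /=; rewrite -sqrtr_sqr ler_wsqrtr // lerDr sqr_ge0. Qed.

Lemma normc_le_ReIm z : normc z <= `|Re z| + `|Im z|.
Proof.
case: z => a b /=.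
rewrite -[leRHS]ger0_norm ?addr_ge0 // -sqrtr_sqr ler_wsqrtr //.
rewrite sqrrD !real_normK ?num_real // addrAC lerDl.
by rewrite mulrn_wge0 // mulr_ge0.
Qed.

Lemma normc_sign m : normc ((-1) ^+ m) = 1.
Proof.
have : ((normc ((-1) ^+ m))%:C = 1 :> R[i])%C.
  by rewrite -normr_normc normrX normrN1 expr1n.
by case.
Qed.

Lemma normc_sum u N n : normc (\sum_(N <= k < n) u k) <= \sum_(N <= k < n) normc (u k).
Proof.
elim/big_rec2: _ => [|k s1 s2 _ h]; first by rewrite ComplexField.Normc.normc0.
by rewrite (le_trans (le_normcD _ _)) // lerD2l.
Qed.

Lemma Re_sum u N n : Re (\sum_(N <= k < n) u k) = \sum_(N <= k < n) Re (u k).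
Proof. by elim/big_rec2: _ => [//|k s1 s2 _ <-]; case: (u k); case: s2. Qed.

Lemma Im_sum u N n : Im (\sum_(N <= k < n) u k) = \sum_(N <= k < n) Im (u k).
Proof. by elim/big_rec2: _ => [//|k s1 s2 _ <-]; case: (u k); case: s2. Qed.

Lemma complex_gt0 (e : R[i]) : 0 < e -> e = ((Re e)%:C)%C /\ 0 < Re e.
Proof. by case: e => a b; rewrite ltcE /= => /andP[/eqP -> ha]. Qed.

Lemma cvg_ReIm u (r s : R) :
  (fun n => Re (u n)) @ \oo --> r -> (fun n => Im (u n)) @ \oo --> s ->
  u @ \oo --> (r +i* s)%C.
Proof.
move=> /cvgrPdist_lt hr /cvgrPdist_lt hs; apply/cvgrPdist_lt => e /complex_gt0 [-> e0].
have e2 : 0 < Re e / 2 by rewrite divr_gt0.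
near=> n; rewrite normr_normc ltcR (le_lt_trans (normc_le_ReIm _)) //.
have -> : Re ((r +i* s)%C - u n) = r - Re (u n) by case: (u n).
have -> : Im ((r +i* s)%C - u n) = s - Im (u n) by case: (u n).
by rewrite [ltRHS](splitr (Re e)) ltrD //; near: n; [exact: hr|exact: hs].
Unshelve. all: by end_near. Qed.

Lemma cvg_normc_dominated {u} {c : R[i]} f : f @ \oo --> (0 : R) ->
  (\forall n \near \oo, normc (u n - c) <= f n) -> u @ \oo --> c.
Proof.
move=> /cvgrPdist_lt hf hb; apply/cvgrPdist_lt => e /complex_gt0 [-> e0].
apply: filterS2 hb (hf _ e0) => n hn; rewrite sub0r normrN => hfn.
rewrite normr_normc ltcR -opprB normcN.
exact: le_lt_trans hn (le_lt_trans (ler_norm _) hfn).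
Qed.

Lemma nondecreasing_psum {f N} : (forall k, (N <= k)%N -> 0 <= f k) ->
  nondecreasing_seq (fun n => \sum_(N <= k < n) f k).
Proof.
move=> f0 m n mn /=; have sum_ge0 p q : (N <= p)%N -> 0 <= \sum_(p <= k < q) f k.
  by move=> Np; rewrite big_nat_cond sumr_ge0 // => k /andP[/andP[/(leq_trans Np)/f0]].
case: (leqP N m) => Nm; first by rewrite (big_cat_nat Nm mn) lerDl sum_ge0.
by rewrite big_geq ?(ltnW Nm) // sum_ge0.
Qed.

Lemma cvg_psum_bounded {f N L} : (forall k, (N <= k)%N -> 0 <= f k) ->
  (forall n, \sum_(N <= k < n) f k <= L) -> cvgn (fun n => \sum_(N <= k < n) f k).
Proof.
move=> f0 hL; apply: nondecreasing_is_cvgn; first exact: nondecreasing_psum.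
by exists L => _ [n _ <-].
Qed.

Lemma psum_bounded_of_nneseries (f : nat -> R) {N} :
  (forall k, 0 <= f k) -> (\sum_(N <= k <oo) (f k)%:E < +oo)%E ->
  exists L, forall n, \sum_(0 <= k < n) f k <= L.
Proof.
move=> f0 f_fin; set E := (\sum_(N <= k <oo) _)%E in f_fin.
have E0 : (0 <= E)%E by apply: nneseries_ge0 => k _ _; rewrite lee_fin.
have tail_le n : \sum_(N <= k < n) f k <= fine E.
  rewrite -lee_fin fineK ?ge0_fin_numE // -sumEFin.
  by apply: nneseries_lim_ge => k _ _; rewrite lee_fin.
exists (\sum_(0 <= k < N) f k + fine E) => n.
apply: le_trans (lerD (lexx _) (tail_le (maxn n N))).
rewrite -big_cat_nat ?leq_maxr //.
by apply: (nondecreasing_psum (fun k _ => f0 k)); exact: leq_maxl.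
Qed.

Lemma cvg_sum_dominated {u} (b : nat -> R) {N L} :
  (forall k, (N <= k)%N -> normc (u k) <= b k) ->
  (forall n, \sum_(N <= k < n) b k <= L) ->
  cvgn (fun n => \sum_(N <= k < n) u k) /\
  normc (limn (fun n => \sum_(N <= k < n) u k)) <= L.
Proof.
move=> ub bL; have b0 k : (N <= k)%N -> 0 <= b k.
  by move=> Nk; exact: le_trans (normc_ge0 _) (ub k Nk).
have cvg_b := cvg_psum_bounded b0 bL.
have cvg_part (g : R[i] -> R) : (forall z, `|g z| <= normc z) ->
    cvgn (fun n => \sum_(N <= k < n) g (u k)).
  move=> gu; have gb0 k : (N <= k)%N -> 0 <= g (u k) + b k.
    move=> Nk; have := le_trans (gu (u k)) (ub k Nk).
    by rewrite ler_norml => /andP[h _]; lra.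
  have gbL n : \sum_(N <= k < n) (g (u k) + b k) <= L + L.
    rewrite big_split /= lerD // (le_trans _ (bL n)) // ler_sum_nat // => k /andP[Nk _].
    exact: le_trans (ler_norm _) (le_trans (gu _) (ub k Nk)).
  have -> : (fun n => \sum_(N <= k < n) g (u k)) =
      (fun n => \sum_(N <= k < n) (g (u k) + b k) - \sum_(N <= k < n) b k).
    by apply/funext => n; rewrite big_split /= addrK.
  exact: is_cvgB (cvg_psum_bounded gb0 gbL) cvg_b.
have := cvg_part _ (@normc_Re); have := cvg_part _ (@normc_Im).
set s := limn _; set r := limn _ => cvg_s cvg_r.
have cvg_u : (fun n => \sum_(N <= k < n) u k) @ \oo --> (r +i* s)%C.
  by apply: cvg_ReIm; under eq_fun do rewrite ?Re_sum ?Im_sum.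
split; first by apply/cvg_ex; exists (r +i* s)%C.
rewrite (cvg_lim _ cvg_u) //=.
have L0 : 0 <= L by have := bL 0%N; rewrite big_geq.
have partial_le n : (\sum_(N <= k < n) Re (u k)) ^+ 2 + (\sum_(N <= k < n) Im (u k)) ^+ 2 <= L ^+ 2.
  have : normc (\sum_(N <= k < n) u k) <= L.
    apply: le_trans (normc_sum _ _ _) (le_trans _ (bL n)).
    by apply: ler_sum_nat => k /andP[Nk _]; exact: ub.
  rewrite -Re_sum -Im_sum; case: (\sum_(N <= k < n) u k) => p q /= h.
  rewrite -(@sqr_sqrtr _ (p ^+ 2 + q ^+ 2)) ?addr_ge0 ?sqr_ge0 //.
  have := sqrtr_ge0 (p ^+ 2 + q ^+ 2); nra.
rewrite -(ger0_norm L0) -sqrtr_sqr ler_wsqrtr //.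
have cvg_sq : (\sum_(N <= k < n) Re (u k)) ^+ 2 + (\sum_(N <= k < n) Im (u k)) ^+ 2
    @[n --> \oo] --> r ^+ 2 + s ^+ 2.
  by rewrite !expr2; apply: cvgD; apply: cvgM.
by apply: (@cvgr_to_le _ \oo _ _ _ _ _ cvg_sq); apply: nearW.
Qed.

Lemma sum_geometric_le (q : R) n : 0 <= q -> q <= 1 / 2 ->
  \sum_(1 <= m < n) q ^+ m <= 2 * q.
Proof.
move=> q0 q2; suff H k : \sum_(1 <= m < k.+1) q ^+ m <= 2 * q - 2 * q ^+ k.+1.
  case: n => [|n]; first by rewrite big_geq // mulr_ge0.
  by apply: le_trans (H n) _; rewrite lerBlDr lerDl mulr_ge0 // exprn_ge0.
elim: k => [|k IH]; first by rewrite big_geq // expr1 subrr.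
rewrite big_nat_recr //= (le_trans (lerD IH (lexx _))) //.
have := exprn_ge0 k.+1 q0; rewrite [q ^+ k.+2]exprS; nra.
Qed.

End ComplexSeries.

Section Tails.
Context {R : realType} (b : nat -> R) {L : R}.
Hypothesis b_ge0 : forall k, 0 <= b k.
Hypothesis b_bounded : forall n, \sum_(0 <= k < n) b k <= L.

Definition tail N := limn (fun n => \sum_(N <= k < n) b k).

Lemma psum_le_start {N M n} : (N <= M)%N ->
  \sum_(M <= k < n) b k <= \sum_(N <= k < n) b k.
Proof.
move=> NM; case: (leqP M n) => Mn; last by rewrite big_geq ?(ltnW Mn) // sumr_ge0.
by rewrite (big_cat_nat NM Mn) lerDr sumr_ge0.
Qed.

Lemma cvg_tail N : cvgn (fun n => \sum_(N <= k < n) b k).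
Proof.
apply: cvg_psum_bounded => // n.
exact: le_trans (psum_le_start (leq0n N)) (b_bounded n).
Qed.

Lemma psum_le_tail N n : \sum_(N <= k < n) b k <= tail N.
Proof.
apply: (@nondecreasing_cvgn_le R (fun n => \sum_(N <= k < n) b k)).
  exact: nondecreasing_psum.
exact: cvg_tail.
Qed.

Lemma tail_ge0 N : 0 <= tail N.
Proof. by have := psum_le_tail N 0; rewrite big_geq. Qed.

Lemma tail_le N M : (N <= M)%N -> tail M <= tail N.
Proof.
move=> NM; apply: limr_le; first exact: cvg_tail.
by apply: nearW => n; exact: le_trans (psum_le_start NM) (psum_le_tail N n).
Qed.

Lemma tailE N : tail N = tail 0 - \sum_(0 <= k < N) b k.
Proof.
apply: cvg_lim; first exact: norm_hausdorff.
have tail_psum : {near \oo, (fun n => \sum_(0 <= k < n) b k - \sum_(0 <= k < N) b k)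
    =1 (fun n => \sum_(N <= k < n) b k)}.
  near=> n; have Nn : (N <= n)%N by near: n; exact: nbhs_infty_ge.
  by rewrite /= (big_cat_nat (leq0n N) Nn) /= addrC addrK.
apply: cvg_trans (near_eq_cvg tail_psum) _.
by apply: cvgB (cvg_cst _); exact: cvg_tail.
Unshelve. all: by end_near. Qed.

Lemma cvg_tail0 : tail @ \oo --> (0 : R).
Proof.
have -> : tail = fun N => tail 0 - \sum_(0 <= k < N) b k.
  by apply/funext => N; exact: tailE.
suff : (fun N => tail 0 - \sum_(0 <= k < N) b k) @ \oo --> tail 0 - tail 0.
  by rewrite subrr.
by apply: cvgB (cvg_cst _) _; exact: cvg_tail.
Qed.

Lemma tail_le_half : \forall N \near \oo, tail N <= 1 / 2.
Proof.
have half_gt0 : (0 : R) < 1 / 2 by rewrite divr_gt0.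
move/cvgrPdist_le: cvg_tail0 => /(_ _ half_gt0); apply: filterS => N.
by rewrite sub0r normrN; exact: le_trans (ler_norm _).
Qed.

End Tails.

Section DifferenceEquation.
Context {R : realType} (x : nat -> R[i]) {L : R}.
Local Notation normc := (@ComplexField.Normc.normc R).
Local Notation a k := (x k * x k.+1).
Local Notation B := (tail (fun k => normc (x k * x k.+1))).
Local Notation S m N := (nestedF x m N 1).
Hypothesis a_bounded : forall n, \sum_(0 <= k < n) normc (a k) <= L.

Let a_ge0 k : 0 <= normc (a k). Proof. exact: normc_ge0. Qed.
Let b := fun k => normc (a k).
Let B_ge0 N : 0 <= B N. Proof. exact: (tail_ge0 b a_ge0 a_bounded). Qed.
Let B_le N M : (N <= M)%N -> B M <= B N.
Proof. exact: (tail_le b a_ge0 a_bounded). Qed.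
Let psum_le_B N n : \sum_(N <= k < n) normc (a k) <= B N.
Proof. exact: (psum_le_tail b a_ge0 a_bounded). Qed.

Lemma cvg_nestedF_step m N : (forall k, normc (S m k) <= B k ^+ m) ->
  cvgn (fun n => \sum_(N <= k < n) a k * S m k.+2) /\
  normc (limn (fun n => \sum_(N <= k < n) a k * S m k.+2)) <= B N ^+ m.+1.
Proof.
move=> S_bound; apply: (cvg_sum_dominated (fun k => normc (a k) * B N ^+ m)).
  move=> k Nk; rewrite ComplexField.Normc.normcM ler_wpM2l //.
  apply: le_trans (S_bound _) _; apply: lerXn2r; rewrite ?nnegrE //.
  by apply: B_le; lia.
by move=> n; rewrite -big_distrl /= exprS ler_wpM2r ?exprn_ge0.
Qed.

Lemma nestedF_succE m N p : (forall k q, nestedF x m k q = q * S m k) ->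
  (forall k, normc (S m k) <= B k ^+ m) ->
  nestedF x m.+1 N p = p * limn (fun n => \sum_(N <= k < n) a k * S m k.+2).
Proof.
move=> S_scale S_bound /=.
have -> : (fun n => \sum_(N <= k < n) nestedF x m k.+2 (p * a k)) =
    (fun n => p * \sum_(N <= k < n) a k * S m k.+2).
  by apply/funext => n; rewrite big_distrr; apply: eq_bigr => k _; rewrite S_scale -mulrA.
apply: cvg_lim; first exact: norm_hausdorff.
exact: cvgM (cvg_cst p) (cvg_nestedF_step m N S_bound).1.
Qed.

Lemma nestedF_scale_bound m :
  (forall N p, nestedF x m N p = p * S m N) /\ (forall N, normc (S m N) <= B N ^+ m).
Proof.
elim: m => [|m [S_scale S_bound]].
  split => [N p|N]; first by rewrite /= mulr1.
  by rewrite /= expr0 /ComplexField.Normc.normc /= expr0n /= expr1n addr0 sqrtr1.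
have S_succE N p := nestedF_succE m N p S_scale S_bound.
split => [N p|N]; first by rewrite !S_succE mul1r.
by rewrite S_succE mul1r; exact: (cvg_nestedF_step m N S_bound).2.
Qed.

Lemma cvg_nestedF m N :
  (fun n => \sum_(N <= k < n) a k * S m k.+2) @ \oo --> S m.+1 N.
Proof.
have [S_scale S_bound] := nestedF_scale_bound m.
by rewrite (nestedF_succE m N 1 S_scale S_bound) mul1r; exact: (cvg_nestedF_step m N S_bound).1.
Qed.

Lemma nestedF_recS m N : S m.+1 N = a N * S m N.+2 + S m.+1 N.+1.
Proof.
have split_first : {near \oo, (fun n => a N * S m N.+2 + \sum_(N.+1 <= k < n) a k * S m k.+2)
    =1 (fun n => \sum_(N <= k < n) a k * S m k.+2)}.
  near=> n; have Nn : (N < n)%N by near: n; exact: nbhs_infty_gt.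
  by rewrite /= (big_ltn Nn).
have cvg_split : (fun n => \sum_(N <= k < n) a k * S m k.+2) @ \oo -->
    a N * S m N.+2 + S m.+1 N.+1.
  apply: cvg_trans (near_eq_cvg split_first) _.
  by apply: cvgD (cvg_cst _) _; exact: cvg_nestedF m N.+1.
exact: (cvg_unique _ (cvg_nestedF m N) cvg_split).
Unshelve. all: by end_near. Qed.

Definition frak_psum N n := \sum_(0 <= m < n) (-1) ^+ m * S m N.

Lemma frak_psumS N n : frak_psum N n.+1 = frak_psum N.+1 n.+1 - a N * frak_psum N.+2 n.
Proof.
have psumS M k : frak_psum M k.+1 = frak_psum M k + (-1) ^+ k * S k M.
  by rewrite /frak_psum big_nat_recr.
elim: n => [|n IH].
  by rewrite /frak_psum !big_nat1 big_geq //= expr0 !mul1r mulr0 subr0.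
rewrite psumS (psumS N.+1 n.+1) (psumS N.+2 n) IH nestedF_recS exprS; ring.
Qed.

Lemma frak_psum_lim N c : frak_psum N n @[n --> \oo] --> c -> frakF x N = c.
Proof.
move=> psum_c; rewrite /frakF.
have tail_c : (\sum_(1 <= m < n) (-1) ^+ m * S m N) @[n --> \oo] --> c - 1.
  rewrite -cvg_shiftS /=.
  have -> : (fun n => \sum_(1 <= m < n.+1) (-1) ^+ m * S m N) = (fun n => frak_psum N n.+1 - 1).
    by apply/funext => n; rewrite /frak_psum [in RHS]big_ltn //= mulr1 expr0 addrAC subrr add0r.
  have psum_c1 : frak_psum N n.+1 @[n --> \oo] --> c by move: psum_c; rewrite -cvg_shiftS.
  exact: (cvgB psum_c1 (cvg_cst _)).
by rewrite (cvg_lim _ tail_c) ?subrKC.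
Qed.

Lemma cvg_frak_psumS N c1 c2 : frak_psum N.+1 n @[n --> \oo] --> c1 ->
  frak_psum N.+2 n @[n --> \oo] --> c2 -> frak_psum N n @[n --> \oo] --> c1 - a N * c2.
Proof.
rewrite -(cvg_shiftS (frak_psum N.+1)) => c1_lim c2_lim.
rewrite -cvg_shiftS; under eq_fun do rewrite frak_psumS.
exact: cvgB c1_lim (cvgM (cvg_cst _) c2_lim).
Qed.

Lemma frak_psum_cvg_small N : B N <= 1 / 2 ->
  frak_psum N n @[n --> \oo] --> frakF x N /\ normc (frakF x N - 1) <= 2 * B N.
Proof.
move=> BN_small.
have [tail_cvg tail_le] : cvgn (fun n => \sum_(1 <= m < n) (-1) ^+ m * S m N) /\
    normc (limn (fun n => \sum_(1 <= m < n) (-1) ^+ m * S m N)) <= 2 * B N.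
  apply: (cvg_sum_dominated (fun m => B N ^+ m)) => [m _|n].
    by rewrite ComplexField.Normc.normcM normc_sign mul1r; exact: (nestedF_scale_bound m).2.
  exact: sum_geometric_le.
have psum_lim : frak_psum N n @[n --> \oo] -->
    1 + limn (fun n => \sum_(1 <= m < n) (-1) ^+ m * S m N).
  rewrite -cvg_shiftS /=.
  have -> : (fun n => frak_psum N n.+1) =
      (fun n => 1 + \sum_(1 <= m < n.+1) (-1) ^+ m * S m N).
    by apply/funext => n; rewrite /frak_psum [in LHS]big_ltn //= mulr1 expr0.
  apply: (cvgD (cvg_cst _)); move: tail_cvg; rewrite -cvg_shiftS; exact.
split; first by rewrite (frak_psum_lim N _ psum_lim).
by rewrite (frak_psum_lim N _ psum_lim) addrAC subrr add0r.
Qed.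

Let B_le_half : \forall N \near \oo, B N <= 1 / 2.
Proof. exact: (tail_le_half b a_ge0 a_bounded). Qed.

Lemma cvg_frak_psum N : frak_psum N n @[n --> \oo] --> frakF x N.
Proof.
pose P M := frak_psum M n @[n --> \oo] --> frakF x M.
apply: (near_oo_backward_ind P 0 _ _ N (leq0n N)).
  apply: filterS B_le_half => M BM.
  exact: (frak_psum_cvg_small M BM).1.
move=> M _ cvg1 cvg2; have cvg0 := cvg_frak_psumS M _ _ cvg1 cvg2.
by rewrite /P (frak_psum_lim M _ cvg0).
Qed.

Lemma frakF_recS N : frakF x N = frakF x N.+1 - a N * frakF x N.+2.
Proof.
apply: frak_psum_lim; apply: cvg_frak_psumS; exact: cvg_frak_psum.
Qed.

Lemma frakF_cvg1 : frakF x N @[N --> \oo] --> (1 : R[i]).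
Proof.
apply: (cvg_normc_dominated (fun N => 2 * B N)).
  rewrite -(mulr0 2); apply: cvgM (cvg_cst _) _; exact: (cvg_tail0 b a_ge0 a_bounded).
apply: filterS B_le_half => N BN.
exact: (frak_psum_cvg_small N BN).2.
Qed.

Section Solutions.
Variables (n0 : nat) (H : nat -> R[i]).
Hypothesis H_rec : forall n, (n0 <= n)%N -> H n - H n.+1 + a n * H n.+2 = 0.
Hypothesis H_cvg0 : H @ \oo --> (0 : R[i]).

Lemma solution_telescope n M : (n0 <= n)%N -> (n <= M)%N ->
  H n = H M - \sum_(n <= k < M) a k * H k.+2.
Proof.
move=> n0n nM; rewrite -(subnK nM); elim: (M - n)%N => [|d IH].
  by rewrite add0n big_geq // subr0.
have n0dn : (n0 <= d + n)%N by rewrite (leq_trans n0n) ?leq_addl.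
rewrite addSn big_nat_recr /= ?leq_addl // IH -[LHS]subr0 -(H_rec _ n0dn); ring.
Qed.

Lemma solution_halve N c : (n0 <= N)%N -> B N <= 1 / 2 ->
  (forall k, (N <= k)%N -> normc (H k) <= c) ->
  forall n, (N <= n)%N -> normc (H n) <= c / 2.
Proof.
move=> n0N BN_small H_le n Nn; apply/ler_addgt0Pr => e e0.
have [M0 _ H_small] : \forall M \near \oo, normc (H M) < e.
  have e0' : (0 : R[i]) < (e%:C)%C by rewrite ltcR.
  move/cvgrPdist_lt : H_cvg0 => /(_ _ e0'); apply: filterS => k.
  by rewrite sub0r normrN normr_normc ltcR.
have nM : (n <= maxn M0 n)%N by rewrite leq_maxr.
rewrite (solution_telescope n _ (leq_trans n0N Nn) nM) (le_trans (le_normcD _ _)) //.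
rewrite normcN addrC lerD //; last by apply/ltW/H_small; exact: leq_maxl.
apply: le_trans (normc_sum _ _ _) _.
apply: (@le_trans _ _ (\sum_(n <= k < maxn M0 n) normc (a k) * c)).
  apply: ler_sum_nat => k /andP[nk _]; rewrite ComplexField.Normc.normcM ler_wpM2l //.
  by apply: H_le; lia.
have c0 : 0 <= c by exact: le_trans (normc_ge0 _) (H_le N (leqnn N)).
rewrite -big_distrl /= mulrC ler_wpM2l // (le_trans (psum_le_B _ _)) //.
by rewrite -div1r (le_trans (B_le _ _ Nn)).
Qed.

Lemma solution_eventually0 : \forall n \near \oo, H n = 0.
Proof.
have [N1 _ BN1] := B_le_half.
have [N2 _ H_le1] : \forall k \near \oo, normc (H k) <= 1.
  move/cvgrPdist_le : H_cvg0 => /(_ 1 ltr01); apply: filterS => k.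
  by rewrite sub0r normrN normr_normc lecR.
set N := maxn (maxn N1 N2) n0.
have [N1N N2N n0N] : [/\ (N1 <= N)%N, (N2 <= N)%N & (n0 <= N)%N].
  by rewrite /N; split; lia.
have H_le_pow j : forall n, (N <= n)%N -> normc (H n) <= (1 / 2) ^+ j.
  elim: j => [|j IH] n Nn; first by rewrite expr0; apply: H_le1; exact: leq_trans N2N Nn.
  rewrite exprSr [X in _ * X]mul1r.
  exact: solution_halve N _ n0N (BN1 _ N1N) IH n Nn.
exists N => // n /= Nn; apply: ComplexField.Normc.eq0_normc; apply/le_anti.
have half_pow0 : (1 / 2 : R) ^+ j @[j --> \oo] --> 0.
  by apply: cvg_expr; rewrite ger0_norm ?divr_ge0 // ltr_pdivrMr // mul1r ltr1n.
rewrite normc_ge0 andbT; apply: (@cvgr_to_ge _ \oo _ _ _ _ _ half_pow0).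
by apply: nearW => j; exact: H_le_pow.
Qed.

Lemma solution_eq0 n : (n0 <= n)%N -> H n = 0.
Proof.
apply: (near_oo_backward_ind (fun n => H n = 0) n0 solution_eventually0).
by move=> k n0k H1 H2; have := H_rec k n0k; rewrite H1 H2 mulr0 addr0 subr0.
Qed.

End Solutions.

End DifferenceEquation.

Theorem mainTheorem2 (R : realType) (x : nat -> R[i])
  (hx0 : forall n : nat, (1 <= n)%N -> x n != 0)
  (hsum : (\sum_(1 <= k <oo) (ComplexField.Normc.normc (x k * x k.+1))%:E < +oo)%E) :
  let F := fun n : nat => frakF x n in
  [/\ (forall n : nat, (1 <= n)%N -> F n - F n.+1 + x n * x n.+1 * F n.+2 = 0),
      F @ \oo --> (1 : R[i])
    & forall G : nat -> R[i],
        (forall n : nat, (1 <= n)%N -> G n - G n.+1 + x n * x n.+1 * G n.+2 = 0) ->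
        G @ \oo --> (1 : R[i]) ->
        forall n : nat, (1 <= n)%N -> G n = F n].
Proof.
move=> F.
have [L a_bounded] := psum_bounded_of_nneseries _ (fun k => normc_ge0 (x k * x k.+1)) hsum.
have F_rec n : F n - F n.+1 + x n * x n.+1 * F n.+2 = 0.
  by rewrite /F /= (frakF_recS x a_bounded n) addrAC subrK subrr.
have F_cvg1 : F @ \oo --> (1 : R[i]) := frakF_cvg1 x a_bounded.
split => [n _||G G_rec G_cvg1 n n1]; [exact: F_rec | exact: F_cvg1 |].
have D_rec k : (1 <= k)%N ->
    G k - F k - (G k.+1 - F k.+1) + x k * x k.+1 * (G k.+2 - F k.+2) = 0.
  move=> k1; transitivity ((G k - G k.+1 + x k * x k.+1 * G k.+2) -
    (F k - F k.+1 + x k * x k.+1 * F k.+2)); first by ring.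
  by rewrite G_rec // F_rec subrr.
have D_cvg0 : (fun k => G k - F k) @ \oo --> (0 : R[i]).
  by rewrite -(subrr 1); exact: cvgB G_cvg1 F_cvg1.
apply/eqP; rewrite -subr_eq0; apply/eqP.
exact: (solution_eq0 x a_bounded 1 (fun k => G k - F k) D_rec D_cvg0 n n1).
Qed.
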